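(* Let $G$ be a finite transitive permutation group on a set $V$ with point stabilizers of order $3$, and suppose $G$ admits a maximal basic intersecting set $\mathcal{F}$ with $|\mathcal{F}|=4$. Then no point stabilizer $G_v$, $v\in V$, is contained in $\mathcal{F}$; that is, $\mathcal{F}=\{1,x,y,z\}$ with $x$, $y$ and $z$ belonging to different point stabilizers.
   Context: A subset $\mathcal{F}\subseteq G$ is intersecting if for all $g,h\in\mathcal{F}$ there is $v\in V$ with $g(v)=h(v)$; it is maximal if not properly contained in another intersecting set; it is basic if it contains the identity $1$. *)

From mathcomp Require Import all_boot all_fingroup.
Set Implicit Arguments. Unset Strict Implicit. Unset Printing Implicit Defensive.
Import GroupScope.

Definition intersecting (V : finType) (F : {set {perm V}}) : Prop :=
  forall g h, g \in F -> h \in F -> exists v : V, g v = h v.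

Definition maximal_intersecting (V : finType) (G : {group {perm V}})
    (F : {set {perm V}}) : Prop :=
  [/\ F \subset G, intersecting F &
      forall F' : {set {perm V}}, F' \subset G -> intersecting F' ->
        F \subset F' -> F' = F].

Definition basic (V : finType) (F : {set {perm V}}) : Prop := 1 \in F.

(* If the stabilizer G_v lay in F, then F = G_v ∪ {z} with z outside G_v.
   Since F contains 1, z fixes some point w; and z^-1 meets every element of
   F (it meets f in G_v because z meets f^-1 in F, and it meets z at w), so
   z^-1 is in F by maximality.  As z^-1 is not in G_v either, z^-1 = z, i.e.
   z is an involution of the stabilizer G_w, of odd order 3: so z = 1, which
   lies in G_v.  Two distinct non-identity elements of F in one stabilizer of
   order 3 would together with 1 fill it, so that case is the same. *)
From mathcomp Require Import all_boot all_fingroup.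
From mathcomp Require Import cyclic.

Set Implicit Arguments.
Unset Strict Implicit.
Unset Printing Implicit Defensive.

Import GroupScope.

Lemma odd_order_involution_trivial (gT : finGroupType) (H : {group gT})
    (x : gT) :
  odd #|H| -> x \in H -> x^-1 = x -> x = 1.
Proof.
move=> oddH xH xVx; apply/eqP; rewrite -order_eq1 -dvdn1.
have /eqP <- : coprime 2 #|H| by rewrite coprime2n.
by rewrite dvdn_gcd order_dvdG // order_dvdn expgS expg1 andbT -{2}xVx mulgV.
Qed.

Lemma perm_agree_inv (V : finType) (g h : {perm V}) :
  (exists u, g u = h u) -> exists u, g^-1 u = h^-1 u.
Proof. by case=> u guhu; exists (g u); rewrite permK guhu permK. Qed.

Section MaximalBasicIntersecting.

Variables (V : finType) (G : {group {perm V}}) (F : {set {perm V}}).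
Hypotheses (maxF : maximal_intersecting G F) (basicF : basic F).

Lemma basic_intersecting_fixed_point (g : {perm V}) :
  g \in F -> exists u, g u = u.
Proof.
case: maxF => _ iF _ gF; have [u gu1u] := iF g 1 gF basicF.
by exists u; rewrite gu1u perm1.
Qed.

Lemma mem_maximal_intersecting (g : {perm V}) :
  g \in G -> (forall f, f \in F -> exists u, g u = f u) -> g \in F.
Proof.
case: maxF => sFG iF maxFG gG gF.
suff <- : g |: F = F by rewrite setU11.
apply: maxFG; last exact: subsetUr.
  by rewrite subUset sub1set gG.
move=> h k; rewrite !inE => /predU1P[-> | hF] /predU1P[-> | kF]; last exact: iF.
- by have [u _] := gF 1 basicF; exists u.
- exact: gF.
- by have [u gu] := gF h hF; exists u.
Qed.

Lemma stabilizer_sub_maximal_intersecting_invg (v : V) (z : {perm V}) :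
  'C_G[v | 'P] \subset F -> F :\: 'C_G[v | 'P] = [set z] -> z^-1 \in F.
Proof.
move=> sGvF Fz; have : z \in F :\: 'C_G[v | 'P] by rewrite Fz set11.
case/setDP=> zF _; case: (maxF) => sFG iF _.
apply: mem_maximal_intersecting => [|f fF].
  by rewrite groupV (subsetP sFG).
have [fGv | fGv] := boolP (f \in 'C_G[v | 'P]).
  rewrite -[f]invgK; apply: perm_agree_inv; apply: iF => //.
  by rewrite (subsetP sGvF) ?groupV.
have : f \in F :\: 'C_G[v | 'P] by rewrite inE fGv.
rewrite Fz => /set1P ->; have [w zw] := basic_intersecting_fixed_point zF.
by exists w; rewrite zw -{1}zw permK.
Qed.

Lemma card_setD_stabilizer_neq1 (v : V) :
  (forall w : V, odd #|'C_G[w | 'P]|) ->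
  'C_G[v | 'P] \subset F -> #|F :\: 'C_G[v | 'P]| != 1%N.
Proof.
move=> oddGw sGvF; apply/negP => /cards1P[z Fz].
have /setDP[zF zGv] : z \in F :\: 'C_G[v | 'P] by rewrite Fz set11.
have zVz : z^-1 = z.
  have zVF := stabilizer_sub_maximal_intersecting_invg sGvF Fz.
  by apply/set1P; rewrite -Fz inE zVF groupV andbT.
have [w zw] := basic_intersecting_fixed_point zF.
case: maxF => sFG _ _.
have zGw : z \in 'C_G[w | 'P].
  by rewrite inE (subsetP sFG) //; apply/astab1P; rewrite /= apermE zw.
by move: zGv; rewrite (odd_order_involution_trivial (oddGw w) zGw zVz) group1.
Qed.

End MaximalBasicIntersecting.

Theorem corollary5p3 (V : finType) (G : {group {perm V}})
    (F : {set {perm V}}) :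
  [transitive G, on [set: V] | 'P] ->
  (forall v : V, #|'C_G[v | 'P]| = 3) ->
  maximal_intersecting G F -> basic F -> #|F| = 4 ->
  (forall v : V, ~ ('C_G[v | 'P] \subset F)) /\
  (forall x y : {perm V}, x \in F -> y \in F -> x != 1 -> y != 1 -> x != y ->
     forall v : V, ~ (x \in 'C_G[v | 'P] /\ y \in 'C_G[v | 'P])).
Proof.
move=> _ card_Gv maxF basicF card_F.
have GvF v : ~ ('C_G[v | 'P] \subset F).
  move=> sGvF; have oddGw w : odd #|'C_G[w | 'P]| by rewrite card_Gv.
  apply/negP: (card_setD_stabilizer_neq1 maxF basicF oddGw sGvF).
  by rewrite cardsD (setIidPr sGvF) card_F card_Gv.
split=> // x y xF yF x1 y1 xy v [xGv yGv]; apply: (GvF v).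
have <- : [set 1; x; y] = 'C_G[v | 'P].
  apply/eqP; rewrite eqEcard card_Gv !subUset !sub1set group1 xGv yGv /=.
  rewrite -setUA !cardsU1 cards1 !inE ![1 == _]eq_sym.
  by rewrite (negbTE x1) (negbTE y1) xy.
by rewrite !subUset !sub1set basicF xF yF.
Qed.
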